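(* Let $r\ge1$ and $n\ge 3r$ be integers, let $P$ be the path on $n$ vertices and $G=P^r$ its $r$-th power. Then $\tau(G)=r$. Moreover, for every positive integer $k$ with $n\ge k^2(r+1)$, there is a (simple) coalition game $\mathcal G$ over $G$ with $\dfrac{\kappa(\mathcal G)}{\kappa^f(\mathcal G)}\ge\left(1-\frac2k\right)\tau(G)$.
   Context: The $r$-th power $P^r$ of the path $P$ with vertices $1,\dots,n$ in order is the graph on $\{1,\dots,n\}$ in which $i\ne j$ are adjacent iff $|i-j|\le r$. Coalition game over $G=(V,E)$: a valuation $v:2^V\to\mathbb Z_{\ge0}$ with $v(\emptyset)=0$, $v(S)=0$ whenever $G[S]$ is disconnected, $v$ not identically zero; simple if all values lie in $\{0,1\}$. $\kappa^f(\mathcal G)=\min\{\sum_{i\in V}x_i: x\in\mathbb R^V_{\ge0},\ \sum_{i\in S}x_i\ge v(S)\ \forall S\subseteq V\}$ and $\kappa(\mathcal G)$ the same minimum over $x\in\mathbb Z^V_{\ge0}$. Thicket number $\tau(G)$: maximum, over collections $\mathcal H$ of nonempty, connected-inducing, pairwise intersecting vertex sets, of the minimum size of a set meeting every member of $\mathcal H$. *)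

From HB Require Import structures.
From mathcomp Require Import all_boot all_order all_algebra.
Set Implicit Arguments. Unset Strict Implicit. Unset Printing Implicit Defensive.
Import Order.TTheory GRing.Theory Num.Theory.

(* A simple graph on a finite vertex type V is given by a symmetric,
   irreflexive boolean relation e. *)

(* The r-th power of the path on n vertices; vertices 0..n-1 (instead of 1..n). *)
Definition path_pow (n r : nat) : rel 'I_n :=
  fun i j => [&& i != j, (i <= j + r)%N & (j <= i + r)%N].
Arguments path_pow : clear implicits.

Definition induced_rel (V : finType) (e : rel V) (S : {set V}) : rel V :=
  fun a b => [&& a \in S, b \in S & e a b].

Definition connectedb (V : finType) (e : rel V) (S : {set V}) : bool :=
  [forall x in S, forall y in S, connect (induced_rel e S) x y].

Definition thicket (V : finType) (e : rel V) (H : {set {set V}}) : bool :=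
  [forall S in H, (S != set0) && connectedb e S] &&
  [forall S in H, forall S' in H, S :&: S' != set0].

Definition hits (V : finType) (H : {set {set V}}) (T : {set V}) : bool :=
  [forall S in H, S :&: T != set0].

Definition hitting_number (V : finType) (H : {set {set V}}) : nat :=
  \big[minn/#|V|]_(T : {set V} | hits H T) #|T|.

Definition thicket_number (V : finType) (e : rel V) : nat :=
  \max_(H : {set {set V}} | thicket e H) hitting_number H.

Definition coalition_game (V : finType) (e : rel V) (v : {set V} -> nat) : Prop :=
  [/\ v set0 = 0%N,
      (forall S : {set V}, ~~ connectedb e S -> v S = 0%N)
    & exists S : {set V}, v S <> 0%N].

Definition simple_game (V : finType) (v : {set V} -> nat) : Prop :=
  forall S : {set V}, (v S <= 1)%N.

Definition int_feasible (V : finType) (v : {set V} -> nat) (x : V -> nat) : Prop :=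
  forall S : {set V}, (v S <= \sum_(i in S) x i)%N.

Definition is_kappa (V : finType) (v : {set V} -> nat) (m : nat) : Prop :=
  (exists x, int_feasible v x /\ \sum_(i : V) x i = m) /\
  (forall x, int_feasible v x -> (m <= \sum_(i : V) x i)%N).

Definition frac_feasible (R : realFieldType) (V : finType) (v : {set V} -> nat)
    (x : V -> R) : Prop :=
  (forall i, 0 <= x i)%R /\
  (forall S : {set V}, (((v S)%:R : R) <= \sum_(i in S) x i)%R).

Definition is_kappa_f (R : realFieldType) (V : finType) (v : {set V} -> nat)
    (m : R) : Prop :=
  (exists x : V -> R, frac_feasible v x /\ (\sum_(i : V) x i)%R = m) /\
  (forall x : V -> R, frac_feasible v x -> (m <= \sum_(i : V) x i)%R).

From HB Require Import structures.
From mathcomp Require Import all_boot all_order all_algebra.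
From mathcomp Require Import zify ring lra.
From Stdlib Require Import Classical.
Import Order.TTheory GRing.Theory Num.Theory.

Set Implicit Arguments.
Unset Strict Implicit.
Unset Printing Implicit Defensive.

(* In the r-th power of a path a connected set moves in steps of length at
   most r, so it cannot jump over a window of r consecutive vertices, while
   deleting fewer than r vertices from a run of consecutive vertices leaves it
   connected.

   Upper bound on the thicket number: in a thicket H pick S0 whose largest
   vertex b is smallest.  Every S in H meets S0, hence has a vertex <= b, and
   has a vertex >= b, so the window [b, b + r) meets S.
   Lower bound: connected sets with more than n - r vertices pairwise
   intersect, and the complement of any set of fewer than r vertices is such
   a set.

   The game: v S = 1 iff S is connected, has at least L = k(r + 1) vertices
   and lies among the first kL vertices.  Weight 1/L on each of these vertices
   is fractionally feasible, and the k disjoint blocks of L vertices show that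
   kappa^f = k.  An integral x must put weight r on every run of L + r - 1
   consecutive vertices, otherwise deleting its support there leaves a
   coalition of value 1 and weight 0; k - 2 disjoint such runs fit, so
   kappa >= (k - 2) r. *)

Definition segment n a c : {set 'I_n} := [set i : 'I_n | a <= i < c].

Lemma card_segment n a c : #|segment n a c| = minn c n - a.
Proof.
elim: c => [|c IH].
  rewrite min0n sub0n; apply/eqP; rewrite cards_eq0; apply/eqP/setP => i.
  by rewrite !inE ltn0 andbF.
have [cn|nc] := ltnP c n; last first.
  have ->: segment n a c.+1 = segment n a c.
    by apply/setP => i; rewrite !inE; have := ltn_ord i; lia.
  by rewrite IH; congr (_ - _); lia.
have [ac|ca] := leqP a c; last first.
  have ->: segment n a c.+1 = segment n a c by apply/setP => i; rewrite !inE; lia.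
  by rewrite IH; lia.
have ->: segment n a c.+1 = Ordinal cn |: segment n a c.
  by apply/setP => i; rewrite !inE -val_eqE /=; lia.
by rewrite cardsU1 IH !inE /= ltnn andbF /=; lia.
Qed.

Lemma segment_full n : segment n 0 n = setT.
Proof. by apply/setP => i; rewrite !inE ltn_ord. Qed.

Lemma big_segment_split (R : Type) (idx : R) (op : Monoid.com_law idx) n
    (F : 'I_n -> R) a b c : a <= b <= c ->
  \big[op/idx]_(i in segment n a c) F i =
  op (\big[op/idx]_(i in segment n a b) F i) (\big[op/idx]_(i in segment n b c) F i).
Proof.
move=> /andP[ab bc]; rewrite (bigID (fun i : 'I_n => i < b)) /=.
by congr (op _ _); apply: eq_bigl => i; rewrite !inE; lia.
Qed.

Lemma big_segment_blocks (R : Type) (idx : R) (op : Monoid.com_law idx) n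
    (F : 'I_n -> R) W q :
  \big[op/idx]_(i in segment n 0 (q * W)) F i =
  \big[op/idx]_(j < q) \big[op/idx]_(i in segment n (j * W) (j * W + W)) F i.
Proof.
elim: q => [|q IH].
  by rewrite big_ord0 big_pred0 // => i; rewrite mul0n inE ltn0 andbF.
by rewrite big_ord_recr /= -IH mulSnr; apply: big_segment_split; rewrite leq_addr.
Qed.

Lemma induced_rel_sym (V : finType) (e : rel V) (S : {set V}) :
  symmetric e -> symmetric (induced_rel e S).
Proof. by move=> e_sym x y; rewrite /induced_rel e_sym andbCA. Qed.

Lemma path_pow_sym n r : symmetric (path_pow n r).
Proof. by move=> i j; rewrite /path_pow eq_sym; congr (_ && _); apply: andbC. Qed.

Lemma hitting_number_le_card (V : finType) (H : {set {set V}}) (T : {set V}) :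
  hits H T -> hitting_number H <= #|T|.
Proof. exact: (@bigmin_le_cond _ nat). Qed.

Lemma hitting_number_ge (V : finType) (H : {set {set V}}) m : m <= #|V| ->
  (forall T, hits H T -> m <= #|T|) -> m <= hitting_number H.
Proof. by move=> m_le m_hits; apply/(@bigmin_geP _ nat)/(conj m_le m_hits). Qed.

Section PathPower.

Variables n r : nat.
Local Notation G := (path_pow n r).

Lemma path_pow_connected_of_steps (S : {set 'I_n}) :
  (forall u y, u \in S -> y \in S -> u < y ->
     exists z, [/\ z \in S, u < z, z <= y & z <= u + r]) ->
  connectedb G S.
Proof.
move=> steps.
have fwd d (u y : 'I_n) : y - u <= d -> u \in S -> y \in S -> u <= y ->
    connect (induced_rel G S) u y.
  elim: d u => [|d IH] u du uS yS uy.
    by rewrite (_ : u = y) ?connect0 //; apply/val_inj => /=; lia.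
  have [yu|lt_uy] := leqP y u.
    by rewrite (_ : u = y) ?connect0 //; apply/val_inj => /=; lia.
  have [z [zS uz zy zr]] := steps u y uS yS lt_uy.
  apply: connect_trans (connect1 _) (IH z _ zS yS zy); last by lia.
  by rewrite /induced_rel uS zS /path_pow -val_eqE /=; apply/and3P; split; lia.
apply/forallP => u; apply/implyP => uS; apply/forallP => y; apply/implyP => yS.
have [uy|yu] := leqP u y; first exact: (fwd (y - u)).
rewrite (sym_connect_sym (induced_rel_sym S (@path_pow_sym n r))).
by apply: (fwd (u - y)) => //; apply: ltnW.
Qed.

Lemma connected_segmentD a c (B : {set 'I_n}) : #|B| < r ->
  connectedb G (segment n a c :\: B).
Proof.
move=> B_small; apply: path_pow_connected_of_steps => u y.
rewrite !inE => /andP[uB /andP[au uc]] /andP[yB /andP[ay yc]] lt_uy.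
have [near|far] := leqP y (u + r).
  by exists y; split => //; rewrite !inE yB ay yc.
have : ~~ (segment n u.+1 (u + r).+1 \subset B).
  apply/negP => /subset_leq_card; rewrite card_segment.
  by have := ltn_ord y; lia.
case/subsetPn => z; rewrite !inE => /andP[uz zr] zB.
by exists z; split; rewrite ?inE ?zB //=; lia.
Qed.

Lemma induced_path_meets_window (S : {set 'I_n}) b p (x : 'I_n) : 0 < r ->
  path (induced_rel G S) x p -> x \in S -> x <= b -> b <= last x p ->
  exists2 z, z \in S & b <= z < b + r.
Proof.
move=> r_gt0; elim: p x => [|y p IH] x /=.
  by move=> _ xS xb bx; exists x => //; lia.
move=> /andP[/and3P[_ yS /and3P[_ _ yx]] yp] xS xb b_last.
have [yb|by_] := leqP y b; first exact: IH yp yS yb b_last.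
have [lt_xb|eq_xb] : x < b \/ x = b :> nat by lia.
  by exists y => //; lia.
by exists x => //; lia.
Qed.

Lemma connected_meets_window (S : {set 'I_n}) (x y : 'I_n) b : 0 < r ->
  connectedb G S -> x \in S -> y \in S -> x <= b <= y ->
  exists2 z, z \in S & b <= z < b + r.
Proof.
move=> r_gt0 S_conn xS yS /andP[xb by_].
have /connectP[p xp y_last] := implyP (forallP (implyP (forallP S_conn x) xS) y) yS.
by apply: induced_path_meets_window r_gt0 xp xS xb _; rewrite -y_last.
Qed.

Lemma thicket_hitting_number_le (H : {set {set 'I_n}}) :
  0 < r -> thicket G H -> hitting_number H <= r.
Proof.
move=> r_gt0 /andP[/forallP H_conn /forallP H_meet].
have [-> | [S1 S1H]] := set_0Vmem H.
  apply: leq_trans (@hitting_number_le_card _ _ set0 _) _; last by rewrite cards0.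
  by apply/forallP => S; rewrite inE.
pose top (S : {set 'I_n}) := \max_(z in S) (z : nat).
case: (arg_minnP top S1H) => S0 S0H S0_min; set b := top S0.
apply: leq_trans (@hitting_number_le_card _ _ (segment n b (b + r)) _) _; last first.
  by rewrite card_segment; lia.
apply/forallP => S; apply/implyP => SH.
have /andP[S_ne S_conn] := implyP (H_conn S) SH; rewrite -card_gt0 in S_ne.
have /set0Pn[x /setIP[xS xS0]] := implyP (forallP (implyP (H_meet S) SH) S0) S0H.
have xb : x <= b.
  exact: (@leq_bigmax_cond _ (mem S0) (fun z : 'I_n => z : nat) x xS0).
have [y yS top_S] := eq_bigmax_cond (fun z : 'I_n => (z : nat)) S_ne.
have [|z zS z_win] := connected_meets_window r_gt0 S_conn xS yS (b := b).
  by rewrite xb -top_S S0_min.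
by apply/set0Pn; exists z; rewrite !inE zS.
Qed.

Definition large_connected : {set {set 'I_n}} :=
  [set S | connectedb G S && (n - r < #|S|)].

Lemma thicket_large_connected : 2 * r <= n -> thicket G large_connected.
Proof.
move=> rn; apply/andP; split.
  apply/forallP => S; apply/implyP; rewrite inE => /andP[-> S_big].
  by rewrite andbT -card_gt0; apply: leq_ltn_trans S_big.
apply/forallP => S; apply/implyP; rewrite inE => /andP[_ S_big].
apply/forallP => S'; apply/implyP; rewrite inE => /andP[_ S'_big].
apply/negP => /eqP SS'; have := cardsUI S S'; rewrite SS' cards0 addn0.
have : #|S :|: S'| <= n by rewrite -[n in _ <= n]card_ord max_card.
by lia.
Qed.

Lemma hitting_number_large_connected :
  0 < r -> r <= n -> r <= hitting_number large_connected.
Proof.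
move=> r_gt0 rn; apply: hitting_number_ge; first by rewrite card_ord.
move=> T T_hits; rewrite leqNgt; apply/negP => T_small.
have : ~: T \in large_connected.
  rewrite inE -setTD -segment_full connected_segmentD //= segment_full setTD.
  by rewrite cardsCs setCK card_ord ltn_sub2lE.
by move/(implyP (forallP T_hits (~: T))); rewrite setIC setICr eqxx.
Qed.

Lemma thicket_number_path_pow : 0 < r -> 2 * r <= n -> thicket_number G = r.
Proof.
move=> r_gt0 rn; apply/eqP; rewrite eqn_leq; apply/andP; split.
  by apply/bigmax_leqP => H; apply: thicket_hitting_number_le.
apply: leq_trans (hitting_number_large_connected r_gt0 _) _; first by lia.
exact: leq_bigmax_cond (thicket_large_connected rn).
Qed.

End PathPower.

Lemma int_feasible_one (V : finType) (v : {set V} -> nat) :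
  v set0 = 0 -> simple_game v -> int_feasible v (fun=> 1).
Proof.
move=> v0 v_simple S; rewrite sum1_card.
have [-> | [x xS]] := set_0Vmem S; first by rewrite v0.
by apply: leq_trans (v_simple S) _; rewrite card_gt0; apply/set0Pn; exists x.
Qed.

Lemma is_kappa_exists (V : finType) (v : {set V} -> nat) (x : V -> nat) :
  int_feasible v x -> exists m, is_kappa v m.
Proof.
move=> x_feas.
pose value m := exists y, int_feasible v y /\ \sum_i y i = m.
have : value (\sum_i x i) by exists x.
elim/ltn_ind: (\sum_i x i) => m IH m_value.
have [[m' [m'_value lt_m'm]] | m_least] := classic (exists m', value m' /\ m' < m).
  exact: IH m' lt_m'm m'_value.
exists m; split => // y y_feas; rewrite leqNgt; apply/negP => lt_ym.
by apply: m_least; exists (\sum_i y i); split => //; exists y.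
Qed.

Definition segment_game n r L N (S : {set 'I_n}) : nat :=
  [&& connectedb (path_pow n r) S, L <= #|S| & S \subset segment n 0 N].
Arguments segment_game : clear implicits.

Section SegmentGame.

Variables n r L N : nat.
Hypotheses (r_gt0 : 0 < r) (N_le_n : N <= n).
Local Notation v := (segment_game n r L N).

Lemma segment_game_segment a : a + L <= N -> v (segment n a (a + L)) = 1.
Proof.
move=> aL_le_N; rewrite /segment_game -[segment n a _]setD0.
rewrite connected_segmentD ?cards0 //=.
rewrite setD0 card_segment (_ : minn (a + L) n - a = L); last by lia.
rewrite leqnn; suff -> : segment n a (a + L) \subset segment n 0 N by [].
by apply/subsetP => i; rewrite !inE /=; lia.
Qed.

Lemma segment_game_coalition : 0 < L -> L <= N -> coalition_game (path_pow n r) v.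
Proof.
move=> L_gt0 L_le_N; split.
- by rewrite /segment_game cards0 leqNgt L_gt0 andbF.
- by move=> S S_disconn; rewrite /segment_game (negbTE S_disconn).
- by exists (segment n 0 (0 + L)); rewrite segment_game_segment.
Qed.

Lemma segment_game_simple : simple_game v.
Proof. by move=> S; apply: leq_b1. Qed.

Lemma int_feasible_segment_game_block x a : int_feasible v x ->
  a + (L + r - 1) <= N -> r <= \sum_(i in segment n a (a + (L + r - 1))) x i.
Proof.
move=> x_feas block_le_N; set J := segment n a _.
rewrite leqNgt; apply/negP => J_light.
set B := [set i in J | x i != 0].
have B_light : #|B| <= \sum_(i in J) x i.
  rewrite -sum1_card (eq_bigl (fun i => (i \in J) && (x i != 0))); last first.
    by move=> i; rewrite inE.
  by rewrite big_mkcondr /=; apply: leq_sum => i _; case: (x i).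
have : v (J :\: B) = 1.
  rewrite /segment_game connected_segmentD /=; last exact: leq_ltn_trans J_light.
  have JB_le_B : #|J :&: B| <= #|B| by apply/subset_leq_card/subsetIr.
  rewrite cardsD card_segment.
  have -> : L <= minn (a + (L + r - 1)) n - a - #|J :&: B| by lia.
  suff -> : J :\: B \subset segment n 0 N by [].
  by apply/subsetP => i; rewrite !inE /=; lia.
move: (x_feas (J :\: B)) => /[swap] ->; rewrite big1 // => i /setDP[iJ].
by rewrite inE iJ negbK => /eqP.
Qed.

Lemma segment_game_int_sum_ge x q : int_feasible v x ->
  q * (L + r - 1) <= N -> q * r <= \sum_i x i.
Proof.
move=> x_feas qW_le_N; set W := L + r - 1.
apply: (@leq_trans (\sum_(i in segment n 0 (q * W)) x i)); last first.
  by rewrite [leqRHS](bigID (mem (segment n 0 (q * W)))) leq_addr.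
rewrite big_segment_blocks -[q in q * r]card_ord -sum_nat_const.
apply: leq_sum => j _; apply: int_feasible_segment_game_block => //.
by have := leq_mul (ltn_ord j) (leqnn W); rewrite mulSnr; lia.
Qed.

Lemma segment_game_frac_sum_ge (R : realFieldType) (y : 'I_n -> R) q :
  frac_feasible v y -> q * L <= N -> (q%:R <= \sum_i y i)%R.
Proof.
move=> [y_ge0 y_feas] qL_le_N.
apply: (@le_trans _ _ (\sum_(i in segment n 0 (q * L)) y i)%R); last first.
  by rewrite [leRHS](bigID (mem (segment n 0 (q * L)))) lerDl sumr_ge0.
rewrite big_segment_blocks -[q in (q%:R)%R]card_ord -sumr_const.
apply: ler_sum => j _; have := y_feas (segment n (j * L) (j * L + L)).
rewrite segment_game_segment //.
by have := leq_mul (ltn_ord j) (leqnn L); rewrite mulSnr; lia.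
Qed.

End SegmentGame.

Lemma kappa_f_segment_game (R : realFieldType) n r L k :
  0 < r -> 0 < L -> k * L <= n ->
  is_kappa_f (segment_game n r L (k * L)) (k%:R : R).
Proof.
move=> r_gt0 L_gt0 kL_le_n; split; last by move=> y /segment_game_frac_sum_ge; apply.
exists (fun i : 'I_n => if (i < k * L)%N then L%:R^-1 else 0)%R; split; first split.
- by move=> i; case: ifP; rewrite ?invr_ge0.
- move=> S; rewrite /segment_game.
  case: andP => [[_ /andP[L_le_S S_sub]] | _]; last first.
    by apply: sumr_ge0 => i _; case: ifP; rewrite ?invr_ge0.
  rewrite (eq_bigr (fun=> L%:R^-1)%R); last first.
    by move=> i /(subsetP S_sub); rewrite inE => /andP[_ ->].
  rewrite sumr_const -[leRHS]mulr_natr mulrC ler_pdivlMr ?ltr0n //.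
  by rewrite -natrM ler_nat mul1n.
- rewrite -big_mkcond (eq_bigl (mem (segment n 0 (k * L)))); last first.
    by move=> i; rewrite !inE.
  rewrite sumr_const card_segment subn0 (_ : minn (k * L) n = k * L); last by lia.
  by rewrite -[X in X = _]mulr_natl natrM mulfK // pnatr_eq0 -lt0n.
Qed.

Lemma ratio_ge_one_sub_2div (R : realFieldType) k t m :
  0 < k -> (k - 2) * t <= m -> ((1 - 2 / k%:R) * t%:R <= m%:R / k%:R :> R)%R.
Proof.
move=> k_gt0 km; rewrite ler_pdivlMr ?ltr0n //.
have -> : ((1 - 2 / k%:R) * t%:R * k%:R = (k%:R - 2) * t%:R :> R)%R.
  by field; rewrite pnatr_eq0 -lt0n.
have [k_ge2 | k_lt2] := leqP 2 k; first by rewrite -natrB // -natrM ler_nat.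
have -> : k = 1 by lia.
have t_ge0 : (0 <= t%:R :> R)%R by rewrite ler0n.
have m_ge0 : (0 <= m%:R :> R)%R by rewrite ler0n.
by lra.
Qed.

Theorem theorem6p3 (r n : nat) :
  (1 <= r)%N -> (3 * r <= n)%N ->
  thicket_number (path_pow n r) = r /\
  (forall k : nat, (0 < k)%N -> (k ^ 2 * (r + 1) <= n)%N ->
     exists v : {set 'I_n} -> nat,
       [/\ coalition_game (path_pow n r) v, simple_game v &
           exists m : nat, is_kappa v m /\
             forall R : realFieldType, exists kf : R,
               is_kappa_f v kf /\
               ((1 - 2 / k%:R) * (thicket_number (path_pow n r))%:R
                  <= m%:R / kf)%R]).
Proof.
move=> r_gt0 n_ge_3r.
have tau : thicket_number (path_pow n r) = r.
  by apply: thicket_number_path_pow => //; lia.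
split=> // k k_gt0; set L := k * (r + 1); rewrite -mulnn -mulnA => kL_le_n.
have L_gt0 : 0 < L by rewrite muln_gt0 k_gt0 addn1.
have L_le_kL : L <= k * L by rewrite leq_pmull.
have v_coal := segment_game_coalition r_gt0 kL_le_n L_gt0 L_le_kL.
have v_simple := @segment_game_simple n r L (k * L).
have [|m kappa_m] := @is_kappa_exists _ (segment_game n r L (k * L)) (fun=> 1).
  by apply: int_feasible_one v_simple; case: v_coal.
exists (segment_game n r L (k * L)); split=> //; exists m; split=> // R.
exists k%:R%R; split; first exact: kappa_f_segment_game.
rewrite tau; apply: ratio_ge_one_sub_2div => //.
have [[x [x_feas <-]] _] := kappa_m.
apply: (segment_game_int_sum_ge r_gt0 kL_le_n x_feas).
by rewrite /L; nia.
Qed.
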